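(* Let $\mathfrak h=\mathfrak v\oplus\mathfrak z$ be a Lie algebra of type H with inner product $\langle\cdot,\cdot\rangle$ and maps $j_Z$. Let $Z_1\in\mathfrak z$ with $\|Z_1\|=1$, let $Z_2\in\mathfrak z$ be nonzero with $Z_2\perp Z_1$, and let $\mathfrak v=\mathfrak v_1\oplus\mathfrak v_2$ be an orthogonal decomposition into nonzero subspaces, each invariant under $j_{Z_1}$ and $j_{Z_2}$. For $r\in\mathbb R$ define $\tilde j:\mathfrak z\to\mathfrak{so}(\mathfrak v)$ by $\tilde j_{Z+\lambda Z_1}(V_1+V_2)=j_{Z+\lambda Z_1}(V_1+V_2)+(r-1)\lambda\, j_{Z_1}V_2$ for $Z\perp Z_1$, $\lambda\in\mathbb R$, $V_i\in\mathfrak v_i$, and let $\mathfrak n_r$ be the vector space $\mathfrak v\oplus\mathfrak z$ with the 2-step nilpotent Lie bracket defined by $\mathfrak z$ central, $[\mathfrak v,\mathfrak v]\subseteq\mathfrak z$ and $\langle Z,[V,W]\rangle=\langle\tilde j_ZV,W\rangle$ for $Z\in\mathfrak z$, $V,W\in\mathfrak v$. Then for every $r>0$ the Lie algebra $\mathfrak n_r$ is non-singular, and if moreover $r\neq1$ then $\mathfrak n_r$ is not isomorphic to any Lie algebra of type H.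
   Context: A metric 2-step nilpotent real Lie algebra $\mathfrak n$ with center $\mathfrak z$ and $\mathfrak v=\mathfrak z^\perp$ has maps $j_Z:\mathfrak v\to\mathfrak v$ ($Z\in\mathfrak z$) given by $\langle j_ZV,W\rangle=\langle Z,[V,W]\rangle$; it is of type H if $j_Z^2=-\langle Z,Z\rangle\mathrm{Id}$ for all $Z\in\mathfrak z$. A 2-step nilpotent Lie algebra is non-singular if $\mathrm{ad}(X):\mathfrak n\to\mathfrak z$ is onto for every $X\notin\mathfrak z$ (equivalently, $\tilde j_Z$ is invertible for every nonzero $Z$). *)

From HB Require Import structures.
From mathcomp Require Import all_boot all_order all_algebra.
From mathcomp Require Import reals.
Set Implicit Arguments. Unset Strict Implicit. Unset Printing Implicit Defensive.
Import Order.TTheory GRing.Theory Num.Theory.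
Local Open Scope ring_scope.

Section Defs.
Variable R : realType.

Definition ip (k : nat) (x y : 'rV[R]_k) : R := (x *m y^T) 0 0.

(* A metric 2-step nilpotent algebra v (+) z, with v = R^n and z = R^m taken
   in orthonormal coordinates, is given by the family J : 'I_m -> 'M_n where
   j_Z V = V *m jZ J Z  (row-vector convention) and jZ J Z = \sum_k Z_k J_k. *)
Definition jZ (n m : nat) (J : 'I_m -> 'M[R]_n) (Z : 'rV[R]_m) : 'M[R]_n :=
  \sum_(k < m) Z 0 k *: J k.

(* The bracket on n = v (+) z  ('rV_(n+m), v = first n coordinates):
   z central, [v,v] in z, and <Z,[V,W]> = <j_Z V, W>. *)
Definition br2 (n m : nat) (J : 'I_m -> 'M[R]_n)
  (x y : 'rV[R]_(n + m)) : 'rV[R]_(n + m) :=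
  row_mx 0 (\row_(k < m) ip (lsubmx x *m J k) (lsubmx y)).

(* Type H: the j_Z are skew-symmetric (as they are when coming from a metric
   2-step nilpotent algebra) and j_Z^2 = - <Z,Z> Id. *)
Definition typeH (n m : nat) (J : 'I_m -> 'M[R]_n) : Prop :=
  (forall k, (J k)^T = - J k) /\
  (forall Z : 'rV[R]_m, jZ J Z *m jZ J Z = - (ip Z Z) *: 1%:M).

Definition nonsingular (n m : nat) (J : 'I_m -> 'M[R]_n) : Prop :=
  forall x : 'rV[R]_(n + m), lsubmx x != 0 ->
  forall c : 'rV[R]_m, exists y, br2 J x y = row_mx 0 c.

Definition lie_iso (N N' : nat)
  (br : 'rV[R]_N -> 'rV[R]_N -> 'rV[R]_N)
  (br' : 'rV[R]_N' -> 'rV[R]_N' -> 'rV[R]_N') : Prop :=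
  exists (A : 'M[R]_(N, N')) (B : 'M[R]_(N', N)),
    [/\ A *m B = 1%:M, B *m A = 1%:M &
        forall x y, br' (x *m A) (y *m A) = br x y *m A].

(* The modified map tilde j:
   tilde j_Z V = j_Z V + (r - 1) <Z,Z1> j_{Z1} (P2 V), where P2 is the
   (orthogonal) projection of v onto v2 along v1; the coefficient of the
   basis vector e_k is tJ k. *)
Definition tJ (n m : nat) (J : 'I_m -> 'M[R]_n) (Z1 : 'rV[R]_m)
  (V1 V2 : 'M[R]_n) (r : R) (k : 'I_m) : 'M[R]_n :=
  J k + ((r - 1) * Z1 0 k) *: (proj_mx V2 V1 *m jZ J Z1).

End Defs.

(* Non-singularity: if V <> 0 and tj_Z V = 0, pairing with j_{Z1} V gives
   <Z,Z1> (|V_1|^2 + r |V_2|^2) = 0 for the components V_i of V; as r > 0, <Z,Z1> = 0, so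
   tj_Z = j_Z, which is injective for Z <> 0.
   Non-isomorphism: an isomorphism of non-singular 2-step algebras maps centre onto centre,
   hence is block triangular, and its v-block T satisfies tj_Z = T j'_{Z'} T^T for a type H
   map j'.  With S = (T T^T)^-1 every (tj_Z S)^2 is then a scalar a(Z).  Now tj_{Z1} is
   j_{Z1} on v_1 and r j_{Z1} on v_2, so S tj_{Z1} S = a(Z1) tj_{Z1}^-1 is a(Z1) j_{Z1}^-1
   on v_1 but a(Z1)/r j_{Z1}^-1 on v_2, while S j_{Z2} S is a multiple of j_{Z2}.  The
   anticommutator of tj_{Z1} S and tj_{Z2} S is a scalar; evaluating it on v_1 and on v_2,
   where j_{Z1} j_{Z2} is skew and injective, forces a(Z1)/r = r a(Z1) with a(Z1) <> 0,
   i.e. r = 1. *)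

From HB Require Import structures.
From mathcomp Require Import all_boot all_order all_algebra.
From mathcomp Require Import reals ring lra.
Import Order.TTheory GRing.Theory Num.Theory.
Local Open Scope ring_scope.
Set Implicit Arguments. Unset Strict Implicit. Unset Printing Implicit Defensive.

Section InnerProduct.
Variables (R : realType) (k : nat).
Implicit Types (u v w : 'rV[R]_k).

Lemma ipC v w : ip v w = ip w v.
Proof. by rewrite /ip -[w *m _]trmxK trmx_mul trmxK [RHS]mxE. Qed.

Lemma ipDl u v w : ip (u + v) w = ip u w + ip v w.
Proof. by rewrite /ip mulmxDl mxE. Qed.

Lemma ipDr u v w : ip u (v + w) = ip u v + ip u w.
Proof. by rewrite ipC ipDl !(ipC u). Qed.

Lemma ipZl a v w : ip (a *: v) w = a * ip v w.
Proof. by rewrite /ip -scalemxAl mxE. Qed.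

Lemma ipZr a v w : ip v (a *: w) = a * ip v w.
Proof. by rewrite ipC ipZl ipC. Qed.

Lemma ipNl v w : ip (- v) w = - ip v w.
Proof. by rewrite -scaleN1r ipZl mulN1r. Qed.

Lemma ipNr v w : ip v (- w) = - ip v w.
Proof. by rewrite ipC ipNl ipC. Qed.

Lemma ip0l w : ip 0 w = 0.
Proof. by rewrite /ip mul0mx mxE. Qed.

Lemma ipMl l (M : 'M[R]_(k, l)) v (w : 'rV[R]_l) : ip (v *m M) w = ip v (w *m M^T).
Proof. by rewrite /ip trmx_mul trmxK mulmxA. Qed.

Lemma ip_sqr v : ip v v = \sum_j v 0 j ^+ 2.
Proof. by rewrite /ip mxE; apply: eq_bigr => j _; rewrite mxE expr2. Qed.

Lemma ip_ge0 v : 0 <= ip v v.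
Proof. by rewrite ip_sqr sumr_ge0 // => j _; rewrite sqr_ge0. Qed.

Lemma ip_eq0 v : (ip v v == 0) = (v == 0).
Proof.
rewrite ip_sqr psumr_eq0 => [|j _]; last exact: sqr_ge0.
apply/allP/eqP => [v0|-> j _]; last by rewrite mxE expr0n eqxx.
by apply/rowP => j; apply/eqP; rewrite mxE -sqrf_eq0 (implyP (v0 j _)) ?mem_index_enum.
Qed.

Lemma ip_skew (M : 'M[R]_k) v : M^T = - M -> ip (v *m M) v = 0.
Proof.
move=> skewM; have : ip (v *m M) v = - ip (v *m M) v.
  by rewrite [LHS]ipMl skewM mulmxN ipC ipNl.
lra.
Qed.

Lemma ip_orth p (U V : 'M[R]_(p, k)) u v :
  U *m V^T = 0 -> (u <= U)%MS -> (v <= V)%MS -> ip u v = 0.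
Proof.
move=> UV /submxP [a ->] /submxP [b ->].
by rewrite /ip trmx_mul mulmxA -(mulmxA a) UV mulmx0 mul0mx mxE.
Qed.

Lemma capmx_orth p (U V : 'M[R]_(p, k)) : U *m V^T = 0 -> (U :&: V = 0)%MS.
Proof.
move=> UV; apply/eqP/rowV0P => v; rewrite sub_capmx => /andP [vU vV].
by apply/eqP; rewrite -ip_eq0 (ip_orth UV vU vV).
Qed.

Lemma ip_delta (M : 'M[R]_k) i j : ip (delta_mx 0 i *m M) (delta_mx 0 j) = M i j.
Proof. by rewrite /ip -rowE trmx_delta -colE !mxE. Qed.

Lemma mx_eq_ip (M N : 'M[R]_k) :
  (forall v w, ip (v *m M) w = ip (v *m N) w) -> M = N.
Proof. by move=> MN; apply/matrixP => i j; rewrite -!ip_delta MN. Qed.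

End InnerProduct.

Lemma mul_row_submx (R : realType) (k n1 n2 p1 p2 : nat) (a : 'M[R]_(k, n1))
    (b : 'M[R]_(k, n2)) (A : 'M[R]_(n1 + n2, p1 + p2)) :
  row_mx a b *m A = row_mx (a *m ulsubmx A + b *m dlsubmx A) (a *m ursubmx A + b *m drsubmx A).
Proof. by rewrite -{1}(submxK A) mul_row_block. Qed.

Lemma mulmx_utri1 (R : realType) (n m n' m' : nat)
    (A : 'M[R]_(n + m, n' + m')) (B : 'M[R]_(n' + m', n + m)) :
  A *m B = 1%:M -> dlsubmx A = 0 -> dlsubmx B = 0 ->
  ulsubmx A *m ulsubmx B = 1%:M /\ drsubmx A *m drsubmx B = 1%:M.
Proof.
move=> AB A0 B0; move: AB; rewrite -{1}[A]submxK -{1}[B]submxK A0 B0 mulmx_block.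
rewrite (scalar_mx_block n m) !mulmx0 !mul0mx !addr0 !add0r.
by move/eq_block_mx => [TU _ _ DE].
Qed.

Lemma mulmx_sandwich (R : realType) (n : nat) (K S : 'M[R]_n) (a : R) (w : 'rV[R]_n) :
  K *m S *m (K *m S) = a%:M -> w *m K *m S *m K *m S = a *: w.
Proof. by move=> E; rewrite -[_ *m S]mulmxA -!mulmxA [K *m _]mulmxA E mul_mx_scalar. Qed.

Section TypeH.
Variables (R : realType) (n m : nat) (J : 'I_m -> 'M[R]_n).
Implicit Types (v w : 'rV[R]_n) (Z W : 'rV[R]_m).

Lemma jZD Z W : jZ J (Z + W) = jZ J Z + jZ J W.
Proof. by rewrite /jZ -big_split; apply: eq_bigr => k _; rewrite mxE scalerDl. Qed.

Lemma mulmx_jZ v Z : v *m jZ J Z = \sum_k Z 0 k *: (v *m J k).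
Proof. by rewrite /jZ mulmx_sumr; apply: eq_bigr => k _; rewrite scalemxAr. Qed.

Lemma ip_jZl v w Z : ip (v *m jZ J Z) w = ip Z (\row_k ip (v *m J k) w).
Proof.
rewrite mulmx_jZ /ip mulmx_suml summxE mxE; apply: eq_bigr => k _.
by rewrite -scalemxAl !mxE.
Qed.

Lemma nonsingular_of_inj :
  (forall v Z, v *m jZ J Z = 0 -> v = 0 \/ Z = 0) -> nonsingular J.
Proof.
move=> jZ_inj x x_nz c; set v := lsubmx x.
pose M : 'M_(m, n) := \matrix_k (v *m J k).
have /row_freeP [B MB] : row_free M.
  apply: inj_row_free => Z; rewrite mulmx_sum_row.
  under eq_bigr => k _ do rewrite rowK.
  by rewrite -mulmx_jZ => /jZ_inj [v0|//]; rewrite -/v v0 eqxx in x_nz.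
exists (row_mx (c *m B^T) 0); rewrite /br2 row_mxKl; congr row_mx.
apply/rowP => k; rewrite mxE /ip trmx_mul trmxK.
by rewrite -(rowK (fun k => v *m J k) k) -/M -row_mul mulmxA MB mul1mx !mxE.
Qed.

Hypothesis HJ : typeH J.

Lemma jZ_skew Z : (jZ J Z)^T = - jZ J Z.
Proof.
apply/matrixP => i j; rewrite /jZ !mxE !summxE -sumrN; apply: eq_bigr => k _.
by have /matrixP/(_ i j) := HJ.1 k; rewrite !mxE => ->; rewrite mulrN.
Qed.

Lemma jZ_sqr Z : jZ J Z *m jZ J Z = - ip Z Z *: 1%:M.
Proof. exact: HJ.2. Qed.

Lemma jZ_anti Z W : jZ J Z *m jZ J W + jZ J W *m jZ J Z = - (2 * ip Z W) *: 1%:M.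
Proof.
have := jZ_sqr (Z + W); rewrite jZD mulmxDl !mulmxDr !jZ_sqr ipDl !ipDr (ipC W Z).
by move/matrixP => E; apply/matrixP => i j; move: (E i j); rewrite !mxE; lra.
Qed.

Lemma ip_jZ Z v w : ip (v *m jZ J Z) (w *m jZ J Z) = ip Z Z * ip v w.
Proof.
by rewrite ipMl jZ_skew mulmxN -mulmxA jZ_sqr -scalemxAr mulmx1 ipNr ipZr mulNr opprK.
Qed.

Lemma ip_jZ_jZ Z W v : ip (v *m jZ J Z) (v *m jZ J W) = ip Z W * ip v v.
Proof.
have E1 : ip (v *m jZ J Z) (v *m jZ J W) = - ip v (v *m (jZ J W *m jZ J Z)).
  by rewrite ipMl jZ_skew mulmxN ipNr mulmxA.
have E2 : ip (v *m jZ J Z) (v *m jZ J W) = - ip v (v *m (jZ J Z *m jZ J W)).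
  by rewrite ipC ipMl jZ_skew mulmxN ipNr mulmxA.
have := congr1 (fun M => ip v (v *m M)) (jZ_anti Z W).
by rewrite /= mulmxDr ipDr -scalemxAr mulmx1 ipZr; lra.
Qed.

Lemma jZ_inj Z v : Z != 0 -> v *m jZ J Z = 0 -> v = 0.
Proof.
move=> Z_nz vZ0; have := ip_jZ Z v v; rewrite vZ0 ip0l => /esym/eqP.
by rewrite mulf_eq0 !ip_eq0 (negPf Z_nz) => /eqP.
Qed.

Lemma mulmx_jZ_jZ v Z : v *m jZ J Z *m jZ J Z = - ip Z Z *: v.
Proof. by rewrite -mulmxA jZ_sqr scalemx1 mul_mx_scalar. Qed.

Lemma jZ_anti_orth Z W : ip Z W = 0 -> jZ J W *m jZ J Z = - (jZ J Z *m jZ J W).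
Proof.
by move=> ZW; apply/eqP; rewrite -addr_eq0 jZ_anti ipC ZW mulr0 oppr0 scale0r.
Qed.

Lemma typeH_nonsingular : nonsingular J.
Proof.
apply: nonsingular_of_inj => v Z vZ0.
by have [->|Z_nz] := eqVneq Z 0; [right | left; exact: jZ_inj vZ0].
Qed.

End TypeH.

Section Center.
Variables (R : realType) (n m : nat) (J : 'I_m -> 'M[R]_n).

Lemma br2_central (c : 'rV[R]_m) y : br2 J (row_mx 0 c) y = 0.
Proof.
rewrite /br2 row_mxKl -row_mx0; congr row_mx; apply/rowP => k.
by rewrite !mxE mul0mx ip0l.
Qed.

Lemma br2_abelian0 (J0 : 'I_0 -> 'M[R]_n) x y : br2 J0 x y = 0.
Proof. by rewrite /br2 [X in row_mx 0 X]thinmx0 row_mx0. Qed.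

Lemma nonsingular_center x :
  nonsingular J -> (0 < m)%N -> (forall y, br2 J x y = 0) -> lsubmx x = 0.
Proof.
move=> nsJ m_gt0 x_central; apply/eqP/contraT => x_nz.
have [y] := nsJ x x_nz (const_mx 1); rewrite x_central => /eqP.
rewrite eq_sym row_mx_eq0 eqxx /= => /eqP/rowP/(_ (Ordinal m_gt0)).
by rewrite !mxE => /eqP; rewrite oner_eq0.
Qed.

End Center.

Definition lie_hom (R : realType) (N N' : nat) (br : 'rV[R]_N -> 'rV[R]_N -> 'rV[R]_N)
  (br' : 'rV[R]_N' -> 'rV[R]_N' -> 'rV[R]_N') (A : 'M[R]_(N, N')) :=
  forall x y, br' (x *m A) (y *m A) = br x y *m A.

Lemma lie_hom_inv (R : realType) (N N' : nat) br br' (A : 'M[R]_(N, N')) B :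
  A *m B = 1%:M -> B *m A = 1%:M -> lie_hom br br' A -> lie_hom br' br B.
Proof.
move=> AB BA homA x y.
by rewrite -[LHS]mulmx1 -AB mulmxA -homA -!mulmxA BA !mulmx1.
Qed.

Lemma lie_iso_abelian (R : realType) (N N' : nat) br br' :
  @lie_iso R N N' br br' -> (forall x y, br' x y = 0) -> forall x y, br x y = 0.
Proof.
move=> [A [B [AB _ homA]]] br'0 x y.
by rewrite -[br x y]mulmx1 -AB mulmxA -homA br'0 mul0mx.
Qed.

Section Isomorphism.
Variables (R : realType) (n m n' m' : nat).
Variables (J : 'I_m -> 'M[R]_n) (J' : 'I_m' -> 'M[R]_n').

(* [dlsubmx A = 0] says that [A] maps the centre [z] into [z']. *)
Lemma lie_hom_dlsubmx0 (A : 'M[R]_(n + m, n' + m')) B :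
  nonsingular J' -> (0 < m')%N -> B *m A = 1%:M -> lie_hom (br2 J) (br2 J') A ->
  dlsubmx A = 0.
Proof.
move=> nsJ' m'_gt0 BA homA; apply/row_matrixP => i; rewrite row0 rowE.
set c : 'rV_m := delta_mx 0 i.
have <- : lsubmx (row_mx 0 c *m A) = c *m dlsubmx A.
  by rewrite mul_row_submx row_mxKl mul0mx add0r.
apply: (nonsingular_center nsJ' m'_gt0) => y.
by rewrite -[y]mulmx1 -BA mulmxA homA br2_central mul0mx.
Qed.

Lemma lie_hom_jZ (A : 'M[R]_(n + m, n' + m')) Z' : lie_hom (br2 J) (br2 J') A ->
  ulsubmx A *m jZ J' Z' *m (ulsubmx A)^T = jZ J (Z' *m (drsubmx A)^T).
Proof.
move=> homA; set T := ulsubmx A; set D := drsubmx A.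
have zbr v w : \row_k ip (v *m T *m J' k) (w *m T) = (\row_l ip (v *m J l) w) *m D.
  have := homA (row_mx v 0) (row_mx w 0).
  rewrite /br2 !mul_row_submx !row_mxKl !mul0mx !addr0 !add0r.
  by case/eq_row_mx.
apply: mx_eq_ip => v w; rewrite !mulmxA ipMl trmxK.
by rewrite ip_jZl zbr [RHS]ip_jZl ipMl trmxK.
Qed.

End Isomorphism.

(* [S] stands for the inverse Gram matrix of another inner product on [v]: the maps [j_Z S]
   are the [j_Z] of the same bracket computed with that inner product. *)
Definition clifford_wrt (R : realType) (n m : nat) (J : 'I_m -> 'M[R]_n) (S : 'M[R]_n) :=
  forall Z : 'rV[R]_m, exists a : R, jZ J Z *m S *m (jZ J Z *m S) = a%:M.

Lemma clifford_anti (R : realType) (n m : nat) (J : 'I_m -> 'M[R]_n) (S : 'M[R]_n) Z W :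
  clifford_wrt J S ->
  exists d : R, jZ J Z *m S *m (jZ J W *m S) + jZ J W *m S *m (jZ J Z *m S) = d%:M.
Proof.
move=> cliffS; have [a EZ] := cliffS Z; have [b EW] := cliffS W.
have [c EZW] := cliffS (Z + W); exists (c - a - b).
move: EZW; rewrite jZD !mulmxDl !mulmxDr EZ EW => EZW.
rewrite !raddfB /= -EZW; apply/matrixP => i j; rewrite !mxE; lra.
Qed.

Lemma lie_iso_clifford (R : realType) (n m n' m' : nat)
    (J : 'I_m -> 'M[R]_n) (J' : 'I_m' -> 'M[R]_n') :
  nonsingular J -> typeH J' -> (0 < m)%N -> (0 < m')%N -> lie_iso (br2 J) (br2 J') ->
  exists2 S, S \in unitmx & clifford_wrt J S.
Proof.
move=> nsJ HJ' m_gt0 m'_gt0 [A [B [AB BA homA]]].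
have A0 := lie_hom_dlsubmx0 (typeH_nonsingular HJ') m'_gt0 BA homA.
have B0 := lie_hom_dlsubmx0 nsJ m_gt0 AB (lie_hom_inv AB BA homA).
have [TU DE] := mulmx_utri1 AB A0 B0; have [UT _] := mulmx_utri1 BA B0 A0.
set T := ulsubmx A in TU UT; set U := ulsubmx B in TU UT.
(* [S = (T T^T)^-1] turns [jZ J Z = T j'_Z' T^T] into [jZ J Z *m S = T j'_Z' T^-1]. *)
exists (U^T *m U).
  have [] // := @mulmx1_unit _ _ (U^T *m U) (T *m T^T).
  by rewrite mulmxA -(mulmxA U^T) UT mulmx1 -trmx_mul TU trmx1.
move=> Z; set Z' := Z *m (drsubmx B)^T; exists (- ip Z' Z').
have jZS : jZ J Z *m (U^T *m U) = T *m jZ J' Z' *m U.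
  rewrite -[Z](mulmx1 Z) -trmx1 -DE trmx_mul [Z *m _]mulmxA -(lie_hom_jZ _ homA) -/T -/Z'.
  by rewrite !mulmxA -(mulmxA _ T^T) -trmx_mul UT trmx1 mulmx1.
rewrite jZS !mulmxA -(mulmxA _ U T) UT mulmx1 -(mulmxA T) jZ_sqr //.
by rewrite -scalemxAr mulmx1 -scalemxAl TU scalemx1.
Qed.

Section Modified.
Variables (R : realType) (n m : nat) (J : 'I_m -> 'M[R]_n).
Variables (Z1 : 'rV[R]_m) (V1 V2 : 'M[R]_n) (r : R).
Local Notation tj := (jZ (tJ J Z1 V1 V2 r)).
Local Notation j1 := (jZ J Z1).
Implicit Types (q V : 'rV[R]_n) (Z : 'rV[R]_m).

Lemma jZ_tJ Z : tj Z = jZ J Z + ((r - 1) * ip Z Z1) *: (proj_mx V2 V1 *m j1).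
Proof.
rewrite {1}/jZ /tJ; under eq_bigr => k _ do rewrite scalerDr scalerA.
rewrite big_split /= -scaler_suml; congr (_ + _ *: _).
by rewrite /ip mxE mulr_sumr; apply: eq_bigr => k _; rewrite mxE mulrCA.
Qed.

Lemma tJ_orth Z : ip Z Z1 = 0 -> tj Z = jZ J Z.
Proof. by move=> ZZ1; rewrite jZ_tJ ZZ1 mulr0 scale0r addr0. Qed.

Hypotheses (HJ : typeH J) (Z1_unit : ip Z1 Z1 = 1).
Hypotheses (V12_orth : V1 *m V2^T = 0) (V12_full : (V1 + V2 == 1%:M)%MS).

Lemma Z1_neq0 : Z1 != 0.
Proof. by rewrite -ip_eq0 Z1_unit oner_eq0. Qed.

Lemma capmx_V21 : (V2 :&: V1 = 0)%MS.
Proof. by rewrite capmxC capmx_orth. Qed.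

Lemma tJ1_V1 q : (q <= V1)%MS -> q *m tj Z1 = q *m j1.
Proof.
move=> qV1; rewrite jZ_tJ Z1_unit mulmxDr -scalemxAr mulmxA.
by rewrite proj_mx_0 ?capmx_V21 // mul0mx scaler0 addr0.
Qed.

Lemma tJ1_V2 q : (q <= V2)%MS -> q *m tj Z1 = r *: (q *m j1).
Proof.
move=> qV2; rewrite jZ_tJ Z1_unit mulr1 mulmxDr -scalemxAr mulmxA.
by rewrite proj_mx_id ?capmx_V21 // -{1}(scale1r (q *m j1)) -scalerDl addrC subrK.
Qed.

Hypothesis r_gt0 : 0 < r.

Lemma tJ_inj V Z : V *m tj Z = 0 -> V = 0 \/ Z = 0.
Proof.
move=> VZ0; have [->|Z_nz] := eqVneq Z 0; [by right | left].
set lam := ip Z Z1; set p1 := V *m proj_mx V1 V2; set p2 := V *m proj_mx V2 V1.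
have V_p : V = p1 + p2.
  by rewrite add_proj_mx ?capmx_orth // (eqmxP V12_full) submx1.
have p12 : ip p1 p2 = 0 by rewrite (ip_orth V12_orth) ?proj_mx_sub.
have key : lam * (ip p1 p1 + r * ip p2 p2) = 0.
  have := congr1 (fun w => ip w (V *m j1)) VZ0.
  rewrite /= ip0l jZ_tJ mulmxDr ipDl ip_jZ_jZ // -scalemxAr ipZl mulmxA -/p2 ip_jZ //.
  rewrite Z1_unit mul1r -/lam V_p !ipDl !ipDr (ipC p2 p1) p12; lra.
have [lam0|lam_nz] := eqVneq lam 0.
  by apply: (jZ_inj HJ Z_nz); move: VZ0; rewrite jZ_tJ -/lam lam0 mulr0 scale0r addr0.
move/eqP: key; rewrite mulf_eq0 (negPf lam_nz) /= => /eqP key.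
have p1_ge0 := ip_ge0 p1; have rp2_ge0 := mulr_ge0 (ltW r_gt0) (ip_ge0 p2).
have /eqP : r * ip p2 p2 = 0 by lra.
rewrite mulf_eq0 (gt_eqF r_gt0) ip_eq0 => /eqP p2_0.
have /eqP : ip p1 p1 = 0 by lra.
by rewrite ip_eq0 V_p p2_0 => /eqP ->; rewrite addr0.
Qed.

Lemma nonsingular_tJ : nonsingular (tJ J Z1 V1 V2 r).
Proof. exact: nonsingular_of_inj tJ_inj. Qed.

Variables (Z2 : 'rV[R]_m) (S : 'M[R]_n).
Local Notation j2 := (jZ J Z2).
Hypotheses (Z2_nz : Z2 != 0) (Z21 : ip Z2 Z1 = 0).
Hypotheses (V1j1 : (V1 *m j1 <= V1)%MS) (V1j2 : (V1 *m j2 <= V1)%MS).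
Hypotheses (V2j1 : (V2 *m j1 <= V2)%MS) (V2j2 : (V2 *m j2 <= V2)%MS).

Lemma jZ21 : j2 *m j1 = - (j1 *m j2).
Proof. by rewrite jZ_anti_orth // ipC. Qed.

Lemma jZ12_skew : (j1 *m j2)^T = - (j1 *m j2).
Proof. by rewrite trmx_mul !jZ_skew // mulmxN mulNmx opprK jZ21. Qed.

Lemma jZ12_inj q : q *m j1 *m j2 = 0 -> q = 0.
Proof.
by move=> /(jZ_inj HJ Z2_nz)/(jZ_inj HJ Z1_neq0).
Qed.

Section Sandwich.
Variables (a1 a2 d : R).
Hypothesis E1 : tj Z1 *m S *m (tj Z1 *m S) = a1%:M.
Hypothesis E2 : tj Z2 *m S *m (tj Z2 *m S) = a2%:M.
Hypothesis Ed : tj Z1 *m S *m (tj Z2 *m S) + tj Z2 *m S *m (tj Z1 *m S) = d%:M.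

Lemma sandwich_tJ2 q : q *m S *m j2 *m S = - (a2 / ip Z2 Z2) *: (q *m j2).
Proof.
have Z2_sq : ip Z2 Z2 != 0 by rewrite ip_eq0.
rewrite {1}(_ : q = (- (ip Z2 Z2)^-1 *: (q *m j2)) *m j2); last first.
  by rewrite -scalemxAl mulmx_jZ_jZ // scalerA mulrNN mulVf ?scale1r.
by rewrite -(tJ_orth Z21) (mulmx_sandwich _ E2) scalerA mulrN mulrC.
Qed.

Lemma sandwich_tJ1_V1 q : (q <= V1)%MS -> q *m S *m tj Z1 *m S = - a1 *: (q *m j1).
Proof.
move=> qV1; rewrite {1}(_ : q = (- (q *m j1)) *m tj Z1); last first.
  rewrite tJ1_V1 ?mulNmx ?mulmx_jZ_jZ // ?Z1_unit ?scaleN1r ?opprK //.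
  by rewrite eqmx_opp (submx_trans (submxMr _ qV1)).
by rewrite (mulmx_sandwich _ E1) scalerN scaleNr.
Qed.

Lemma sandwich_tJ1_V2 q : (q <= V2)%MS -> q *m S *m tj Z1 *m S = - (a1 / r) *: (q *m j1).
Proof.
move=> qV2; have r_nz : r != 0 by rewrite gt_eqF.
rewrite {1}(_ : q = (- r^-1 *: (q *m j1)) *m tj Z1); last first.
  rewrite tJ1_V2; last by rewrite scalemx_sub // (submx_trans (submxMr _ qV2)).
  by rewrite -scalemxAl mulmx_jZ_jZ // Z1_unit !scalerA -{1}[q]scale1r; congr (_ *: _); field.
by rewrite (mulmx_sandwich _ E1) scalerA mulrN mulrC.
Qed.

Lemma anti_tJ_V1 q : (q <= V1)%MS -> (a1 - a2 / ip Z2 Z2) *: (q *m j1 *m j2) = d *: q.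
Proof.
move=> qV1; rewrite -[d *: q]mul_mx_scalar -Ed mulmxDr !mulmxA (tJ_orth Z21) tJ1_V1 //.
rewrite sandwich_tJ2 sandwich_tJ1_V1; last exact: submx_trans (submxMr _ qV1) V1j2.
by rewrite -!mulmxA jZ21 mulmxN scalerN -scaleNr -scalerDl; congr (_ *: _); ring.
Qed.

Lemma anti_tJ_V2 q : (q <= V2)%MS -> (a1 / r - r * (a2 / ip Z2 Z2)) *: (q *m j1 *m j2) = d *: q.
Proof.
move=> qV2; rewrite -[d *: q]mul_mx_scalar -Ed mulmxDr !mulmxA (tJ_orth Z21) tJ1_V2 //.
rewrite sandwich_tJ2 sandwich_tJ1_V2; last exact: submx_trans (submxMr _ qV2) V2j2.
rewrite -!mulmxA jZ21 mulmxN -!scalemxAl !mulmxA scalerA scalerN -scaleNr.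
by rewrite -scalerDl; congr (_ *: _); ring.
Qed.

End Sandwich.

Lemma tJ_clifford_r_eq1 :
  V1 != 0 -> V2 != 0 -> S \in unitmx -> clifford_wrt (tJ J Z1 V1 V2 r) S -> r = 1.
Proof.
move=> V1_nz V2_nz S_unit cliffS.
have [a1 E1] := cliffS Z1; have [a2 E2] := cliffS Z2.
have [d Ed] := clifford_anti Z1 Z2 cliffS.
have v_nz : nz_row V1 != 0 by rewrite nz_row_eq0.
have u_nz : nz_row V2 != 0 by rewrite nz_row_eq0.
have Ev := anti_tJ_V1 E1 E2 Ed (nz_row_sub V1).
have Eu := anti_tJ_V2 E1 E2 Ed (nz_row_sub V2).
have d0 : d = 0.
  have := congr1 (fun w => ip w (nz_row V1)) Ev.
  rewrite /= !ipZl -mulmxA ip_skew ?jZ12_skew // mulr0 => /esym/eqP.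
  by rewrite mulf_eq0 ip_eq0 (negPf v_nz) orbF => /eqP.
have a1E : a1 = a2 / ip Z2 Z2.
  move: Ev; rewrite d0 scale0r => /eqP; rewrite scaler_eq0 subr_eq0 => /orP [/eqP //|].
  by move/eqP/jZ12_inj/eqP; rewrite (negPf v_nz).
have a1_nz : a1 != 0.
  have S_inj (w : 'rV_n) : w *m S = 0 -> w = 0.
    by move=> wS0; rewrite -(mulmxK S_unit w) wS0 mul0mx.
  have tj1_inj (w : 'rV_n) : w *m tj Z1 = 0 -> w = 0.
    by move/tJ_inj => [//|Z1_0]; move: Z1_neq0; rewrite Z1_0 eqxx.
  apply: contra_neq v_nz => a1_0; move: (sandwich_tJ1_V1 E1 (nz_row_sub V1)).
  by rewrite a1_0 oppr0 scale0r; move/S_inj/tj1_inj/S_inj.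
move: Eu; rewrite d0 scale0r -a1E => /eqP; rewrite scaler_eq0 => /orP [/eqP Er|]; last first.
  by move/eqP/jZ12_inj/eqP; rewrite (negPf u_nz).
have : a1 * (1 - r ^+ 2) = 0 by rewrite -(mulr0 r) -Er; field; rewrite gt_eqF.
by move/eqP; rewrite mulf_eq0 (negPf a1_nz) subr_eq0 eq_sym sqrp_eq1 ?ltW // => /eqP.
Qed.

End Modified.

Theorem mainTheorem9 (R : realType) (n m : nat) (J : 'I_m -> 'M[R]_n)
  (Z1 Z2 : 'rV[R]_m) (V1 V2 : 'M[R]_n) (r : R) :
  typeH J ->
  ip Z1 Z1 = 1 ->
  Z2 != 0 -> ip Z2 Z1 = 0 ->
  V1 != 0 -> V2 != 0 ->
  V1 *m V2^T = 0 -> (V1 + V2 == 1%:M)%MS ->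
  (V1 *m jZ J Z1 <= V1)%MS -> (V1 *m jZ J Z2 <= V1)%MS ->
  (V2 *m jZ J Z1 <= V2)%MS -> (V2 *m jZ J Z2 <= V2)%MS ->
  0 < r ->
  nonsingular (tJ J Z1 V1 V2 r) /\
  (r != 1 -> forall (n' m' : nat) (J' : 'I_m' -> 'M[R]_n'),
     typeH J' -> ~ lie_iso (br2 (tJ J Z1 V1 V2 r)) (br2 J')).
Proof.
move=> HJ Z1_unit Z2_nz Z21 V1_nz V2_nz V12_orth V12_full V1j1 V1j2 V2j1 V2j2 r_gt0.
have ns := nonsingular_tJ HJ Z1_unit V12_orth V12_full r_gt0.
split=> // r_neq1 n' m' J' HJ' iso.
have m_gt0 : (0 < m)%N.
  by case: (posnP m) (Z1_neq0 Z1_unit) => // m0; subst m; rewrite thinmx0 eqxx.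
case: m' J' HJ' iso => [|m'] J' HJ' iso.
  have := nonsingular_center ns m_gt0 (lie_iso_abelian iso (br2_abelian0 J') (row_mx (nz_row V1) 0)).
  by rewrite row_mxKl => /eqP; rewrite nz_row_eq0 (negPf V1_nz).
have [S S_unit cliffS] := lie_iso_clifford ns HJ' m_gt0 (ltn0Sn m') iso.
move/eqP: r_neq1; apply.
exact: (tJ_clifford_r_eq1 HJ Z1_unit V12_orth V12_full r_gt0 Z2_nz Z21
  V1j1 V1j2 V2j1 V2j2 V1_nz V2_nz S_unit cliffS).
Qed.
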